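(* Let $n\ge 1$, $m\ge 2$, $0\le k\le n-1$, and let $\overline{\mathcal{C}}^k_{ac}$ be the class of all complete and all incomplete acyclic $k$-bounded CP-nets over $n$ variables with $m$ values each, over the instance space $\overline{\mathcal{X}}_{swap}$. Then: (1) $\mathrm{VCD}(\overline{\mathcal{C}}^{n-1}_{ac})=m^n-1$; (2) $\mathrm{VCD}(\overline{\mathcal{C}}^{0}_{ac})=(m-1)n$; (3) $\mathrm{VCD}(\overline{\mathcal{C}}^{k}_{ac})\ge(m-1)\mathcal{M}_k=(m-1)(n-k)m^k+m^k-1$.
   Context: Variables $V=\{v_1,\dots,v_n\}$, each with a finite domain of size $m$. An outcome assigns a value to every variable; $\mathcal{O}_X$ denotes assignments to $X\subseteq V$. A CP-net specifies for each $v_i$ a parent set $Pa(v_i)\subseteq V\setminus\{v_i\}$ and, for each context $\gamma\in\mathcal{O}_{Pa(v_i)}$, either a strict total order $\succ^{v_i}_\gamma$ on $D_{v_i}$ or nothing (complete if always given, incomplete otherwise); parents are non-dummy. Acyclic: parent graph (edges $(v_j,v_i)$, $v_j\in Pa(v_i)$) acyclic; $k$-bounded: all $|Pa(v_i)|\le k$. Improving flip from $o$ to $o'$ (differing only in $v_i$): $\succ^{v_i}_{o[Pa(v_i)]}$ is given and $o'[v_i]\succ^{v_i}_{o[Pa(v_i)]}o[v_i]$; $o'\succ o$ iff a nonempty sequence of improving flips leads from $o$ to $o'$. $\overline{\mathcal{X}}_{swap}$ is the set of all ordered pairs $x=(x.1,x.2)$ of outcomes differing in exactly one variable; a CP-net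 $N$ is the concept $c_N(x)=1$ iff $x.1\succ x.2$ under $N$. VCD is the largest size of a set on which all labelings are realized by the class. $\mathcal{M}_k=(n-k)m^k+\frac{m^k-1}{m-1}$. *)

From mathcomp Require Import all_boot.
Set Implicit Arguments. Unset Strict Implicit. Unset Printing Implicit Defensive.

Definition outcome (n m : nat) := {ffun 'I_n -> 'I_m}.

(* A binary relation on the domain 'I_m, stored as a finite function so that
   equality of CPT entries is decidable/extensional. *)
Definition domrel (m : nat) := {ffun 'I_m * 'I_m -> bool}.

Definition strict_total m (r : domrel m) : Prop :=
  [/\ forall x, ~~ r (x, x),
      forall x y z, r (x, y) -> r (y, z) -> r (x, z)
    & forall x y, x != y -> r (x, y) || r (y, x)].

(* The CPT of v_i is given as a function of
   the whole outcome, required (in [wf_cpnet]) to depend only on the values of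
   the parents, i.e. it is a function of the context in O_{Pa(v_i)}.
   [None] means no order is given for that context (incomplete CP-net). *)
Record cpnet (n m : nat) := CPNet {
  Pa  : 'I_n -> {set 'I_n};
  cpt : 'I_n -> outcome n m -> option (domrel m) }.

Definition wf_cpnet n m (N : cpnet n m) : Prop :=
  [/\ forall i, i \notin Pa N i,
      forall i (o o' : outcome n m),
        (forall j, j \in Pa N i -> o j = o' j) -> cpt N i o = cpt N i o',
      forall i o r, cpt N i o = Some r -> strict_total r
    &
      forall i j, j \in Pa N i -> exists (o o' : outcome n m),
        (forall l, l != j -> o l = o' l) /\ cpt N i o <> cpt N i o'].

Definition pa_edge n m (N : cpnet n m) : rel 'I_n := fun j i => j \in Pa N i.

Definition acyclic n m (N : cpnet n m) : Prop :=
  forall i j, pa_edge N j i -> ~~ connect (pa_edge N) i j.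

Definition kbounded n m (k : nat) (N : cpnet n m) : Prop :=
  forall i, #|Pa N i| <= k.

Definition acyclic_kbounded n m k (N : cpnet n m) : Prop :=
  [/\ wf_cpnet N, acyclic N & kbounded k N].

Definition iflip n m (N : cpnet n m) : rel (outcome n m) := fun o o' =>
  [exists i, [forall l, (l != i) ==> (o l == o' l)] && (o i != o' i) &&
     match cpt N i o with Some r => r (o' i, o i) | None => false end].

Definition prefers n m (N : cpnet n m) (o' o : outcome n m) : bool :=
  [exists o1, iflip N o o1 && connect (iflip N) o1 o'].

Definition is_swap n m (x : outcome n m * outcome n m) : bool :=
  #|[set i | x.1 i != x.2 i]| == 1.

Definition concept n m (N : cpnet n m) (x : outcome n m * outcome n m) : bool :=
  prefers N x.1 x.2.

Definition shattered n m (C : cpnet n m -> Prop)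
    (S : {set outcome n m * outcome n m}) : Prop :=
  {subset S <= is_swap (m:=m)} /\
  forall T : {set outcome n m * outcome n m}, T \subset S ->
    exists N, C N /\ forall x, x \in S -> concept N x = (x \in T).

Definition VCD_is n m (C : cpnet n m -> Prop) (d : nat) : Prop :=
  (exists S, shattered C S /\ #|S| = d) /\
  (forall S, shattered C S -> #|S| <= d).

Definition VCD_ge n m (C : cpnet n m -> Prop) (d : nat) : Prop :=
  exists S, shattered C S /\ d <= #|S|.

Definition Mk (n m k : nat) : nat := (n - k) * m ^ k + (m ^ k - 1) %/ (m - 1).

From mathcomp Require Import all_boot all_order all_algebra zify.
Set Implicit Arguments. Unset Strict Implicit. Unset Printing Implicit Defensive.
Import Order.TTheory GRing.Theory Num.Theory.

(* On a swap pair x flipping v, an acyclic CP-net prefers x.1 to x.2 iff the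
   CPT of v in the common parent context ranks x.1 v above x.2 v: along an
   improving sequence from x.2 to x.1, a changed variable none of whose
   parents changes only moves up in one fixed order, so it cannot return to
   its initial value; hence it is v, and by acyclicity no parent of v changes.

   If S is shattered and larger than the dimension d of a space
   of functions f on outcomes, some nonzero weighting u of S annihilates every
   f x.1 - f x.2.  Label each pair by the sign of u, corrected per flipped
   variable so that every flipped variable has a positively labelled pair.  A
   net realizing these labels makes the signed weighted rank gaps of the CPT
   of a suitable variable v sum to a positive number, although they are
   annihilated.  For d = m^n - 1 (all functions modulo constants) v must be
   chosen minimal among the flipped variables and u first restricted to one
   parent context of v, by induction on the support; for nets without parents
   d = (m - 1) n suffices (sums of one-variable functions modulo constants).

   Lower bound.  The pairs (o, o[j := z]) with o j <> z, o arbitrary on the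
   first min(j, k) variables and o = z elsewhere, are shattered: v_j only
   needs to read those first min(j, k) variables. *)

Section StrictTotalOrder.
Variables (m : nat) (r : domrel m).
Hypothesis r_st : strict_total r.

Lemma st_irr a : ~~ r (a, a). Proof. by case: r_st. Qed.

Lemma st_trans a b c : r (a, b) -> r (b, c) -> r (a, c).
Proof. by case: r_st => _ + _; apply. Qed.

Lemma st_total a b : a != b -> r (a, b) || r (b, a).
Proof. by case: r_st => _ _; apply. Qed.

Definition st_rank a := #|[set b | r (a, b)]|.

Lemma st_rank_lt a b : r (a, b) -> st_rank b < st_rank a.
Proof.
move=> rab; apply: proper_card; apply/properP; split.
  by apply/subsetP => c; rewrite !inE => /(st_trans rab).
by exists b; rewrite !inE // st_irr.
Qed.

Lemma st_rank_gap_gt0 (y : rat) a b : (y != 0)%R -> a != b -> r (a, b) = (0 < y)%R ->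
  (0 < y * ((st_rank a)%:R - (st_rank b)%:R))%R.
Proof.
move=> y_neq0 neq_ab rab; have [y_gt0|y_le0] := ltrP 0 y.
  by rewrite mulr_gt0 // subr_gt0 ltr_nat st_rank_lt ?rab.
have y_lt0 : (y < 0)%R by rewrite lt_neqAle y_neq0.
have rba : r (b, a) by move: (st_total neq_ab); rewrite rab ltNge y_le0.
by rewrite nmulr_rgt0 // subr_lt0 ltr_nat st_rank_lt.
Qed.

End StrictTotalOrder.

Section Swaps.
Variables n m : nat.
Implicit Types (x : outcome n m * outcome n m) (v : 'I_n).

Definition flips x v :=
  [forall l, (l != v) ==> (x.1 l == x.2 l)] && (x.1 v != x.2 v).

Lemma flipsP x v :
  reflect ((forall l, l != v -> x.1 l = x.2 l) /\ x.1 v != x.2 v) (flips x v).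
Proof.
apply: (iffP andP) => -[agree ->]; split=> //.
  by move=> l /(implyP (forallP agree l)) /eqP.
by apply/forallP => l; apply/implyP => /agree ->.
Qed.

Lemma swapP x : reflect (exists v, flips x v) (is_swap x).
Proof.
apply: (iffP cards1P) => -[v Dv]; exists v.
  have diff l : (x.1 l != x.2 l) = (l == v).
    by move/setP: Dv => /(_ l); rewrite !inE.
  by apply/flipsP; split=> [l|]; [rewrite -diff => /negPn/eqP | rewrite diff].
apply/setP => l; rewrite !inE; case/flipsP: Dv => agree neq.
by have [->|/agree ->] := eqVneq l v; rewrite ?eqxx.
Qed.

Lemma flips_inj x v w : flips x v -> flips x w -> v = w.
Proof.
case/flipsP=> agree _ /flipsP[_]; apply: contraNeq => neq.
by rewrite agree // eq_sym.
Qed.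

End Swaps.

Section SwapPreference.
Variables (n m : nat) (N : cpnet n m).
Hypotheses (N_wf : wf_cpnet N) (N_acyclic : acyclic N).

Definition parents_agree (w : 'I_n) (b o : outcome n m) :=
  [forall j in Pa N w, o j == b j].

Definition cpt_ge (w : 'I_n) (b : outcome n m) (a c : 'I_m) :=
  (a == c) || (if cpt N w b is Some R then R (a, c) else false).

Lemma cpt_ge_refl w b a : cpt_ge w b a a.
Proof. by rewrite /cpt_ge eqxx. Qed.

Lemma cpt_ge_trans w b a c d : cpt_ge w b a c -> cpt_ge w b c d -> cpt_ge w b a d.
Proof.
rewrite /cpt_ge; case Ew: (cpt N w b) => [R|]; last by rewrite !orbF => /eqP ->.
have R_st : strict_total R by case: N_wf => _ _ /(_ _ _ _ Ew).
case/predU1P=> [-> //|Rac] /predU1P[<-|Rcd]; first by rewrite Rac orbT.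
by rewrite (st_trans R_st Rac Rcd) orbT.
Qed.

Lemma iflip_cpt_ge w b o o' :
  parents_agree w b o -> iflip N o o' -> cpt_ge w b (o' w) (o w).
Proof.
move=> /forall_inP agree /existsP[i /andP[/andP[/forallP same _] better]].
have [eq_iw|neq_iw] := eqVneq i w; last first.
  by move: (same w); rewrite eq_sym neq_iw => /eqP ->; apply: cpt_ge_refl.
subst i; have [_ cpt_local _ _] := N_wf.
rewrite /cpt_ge -(cpt_local w o b); last by move=> j /agree /eqP.
by case: (cpt N w o) better => // R ->; rewrite orbT.
Qed.

Lemma improving_path_monotone w b o ps :
  path (iflip N) o ps -> all (parents_agree w b) (o :: ps) ->
  {in o :: ps, forall q : outcome n m,
    cpt_ge w b (q w) (o w) && cpt_ge w b (last o ps w) (q w)}.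
Proof.
elim: ps o => [|o' ps IH] o /=.
  by move=> _ _ q; rewrite inE => /eqP ->; rewrite cpt_ge_refl.
case/andP=> flip_o path_ps /andP[agree_o agree_ps] q.
have step := iflip_cpt_ge agree_o flip_o.
have /andP[_ last_o'] := IH o' path_ps agree_ps o' (mem_head _ _).
rewrite inE => /predU1P[->|q_ps]; first by rewrite cpt_ge_refl (cpt_ge_trans last_o').
have /andP[q_o' last_q] := IH o' path_ps agree_ps q q_ps.
by rewrite last_q (cpt_ge_trans q_o').
Qed.

Definition ancestors (w : 'I_n) := [set p | connect (pa_edge N) p w].

Lemma card_ancestors_lt p w : p \in Pa N w -> #|ancestors p| < #|ancestors w|.
Proof.
move=> pw; apply: proper_card; apply/properP; split.
  by apply/subsetP => q; rewrite !inE => /connect_trans; apply; apply: connect1.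
by exists w; rewrite !inE ?connect0 //; apply: N_acyclic.
Qed.

Lemma minimal_ancestor (F : pred 'I_n) p : F p ->
  exists w, [/\ F w, connect (pa_edge N) w p & {in Pa N w, forall q, ~~ F q}].
Proof.
move=> Fp; have Gp : [pred w | F w && connect (pa_edge N) w p] p.
  by rewrite /= Fp connect0.
case: (arg_minnP (fun w => #|ancestors w|) Gp) => w /andP[Fw wp] w_min.
exists w; split=> // q qw; apply: contraTN (card_ancestors_lt qw) => Fq.
by rewrite -leqNgt w_min //= Fq (connect_trans (connect1 qw)).
Qed.

Lemma concept_swap x v : flips x v ->
  concept N x = (if cpt N v x.2 is Some R then R (x.1 v, x.2 v) else false).
Proof.
case/flipsP=> agree_x neq_x; apply/idP/idP; last first.
  case Ev: (cpt N v x.2) => [R|] // Rx.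
  apply/existsP; exists x.1; rewrite connect0 andbT.
  apply/existsP; exists v; rewrite Ev Rx eq_sym neq_x !andbT.
  by apply/forallP => l; apply/implyP => /agree_x ->.
case/existsP=> o1 /andP[flip1 /connectP[ps path_ps last_ps]].
set o := x.2; have path_o : path (iflip N) o (o1 :: ps) by rewrite /= flip1.
have last_o : last o (o1 :: ps) = x.1 by rewrite /= last_ps.
pose changed w := has (fun q : outcome n m => q w != o w) (o :: o1 :: ps).
have agree_path w : {in Pa N w, forall p, ~~ changed p} ->
    all (parents_agree w o) (o :: o1 :: ps).
  move=> fixed; apply/allP => q q_path; apply/forall_inP => p /fixed.
  by move/hasPn/(_ q q_path); rewrite negbK.
have only_v w : changed w -> {in Pa N w, forall p, ~~ changed p} -> w = v.
  case/hasP=> q q_path neq_q fixed.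
  have /andP[] := improving_path_monotone path_o (agree_path w fixed) q_path.
  rewrite last_o /cpt_ge (negbTE neq_q) /=; case Ew: (cpt N w o) => [R|] // Rq.
  have R_st : strict_total R by case: N_wf => _ _ /(_ _ _ _ Ew).
  case/predU1P=> [eq_q | Rlast].
    by move: neq_q; apply: contraNeq => /agree_x; rewrite eq_q => ->.
  by move: (st_trans R_st Rlast Rq); apply: contraTeq => /agree_x ->; apply: st_irr.
have fixed_v : {in Pa N v, forall p, ~~ changed p}.
  move=> p pv; apply/negP => /minimal_ancestor[w [cw wp fixed_w]].
  by move: (N_acyclic pv); rewrite -(only_v w cw fixed_w) wp.
have := improving_path_monotone path_o (agree_path v fixed_v) (mem_head _ _).
by case/andP=> _; rewrite last_o /cpt_ge (negbTE neq_x).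
Qed.

End SwapPreference.

Lemma exists_mem_of_card_gt (T : finType) (A : {set T}) k :
  (k < #|A|)%N -> exists x, x \in A.
Proof. by move=> lt_kA; apply/set0Pn; rewrite -card_gt0 (leq_ltn_trans _ lt_kA). Qed.

Section Annihilators.
Local Open Scope ring_scope.

Lemma exists_kernel_weights (X J : finType) (S : {set X}) (JJ : {set J})
    (M : X -> J -> rat) :
  (#|JJ| < #|S|)%N -> exists u : X -> rat,
    [/\ forall x, u x != 0 -> x \in S, exists x, u x != 0
      & {in JJ, forall j, \sum_x u x * M x j = 0}].
Proof.
move=> JJ_lt_S; have [x0 x0S] := exists_mem_of_card_gt JJ_lt_S.
pose A : 'M[rat]_(#|S|, #|JJ|) := \matrix_(i, j) M (enum_val i) (enum_val j).
have [i nz_i] : exists i, row i (kermx A) != 0.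
  apply/existsP; apply: contraTT JJ_lt_S; rewrite negb_exists => /forallP zero.
  have ker0 : kermx A = 0 by apply/row_matrixP => i; rewrite row0; apply/eqP/negPn.
  move/eqP: (mxrank_ker A); rewrite ker0 mxrank0 eq_sym subn_eq0 -leqNgt.
  by move/leq_trans; apply; apply: rank_leq_col.
set w := row i (kermx A).
have wA0 : w *m A = 0 by rewrite -row_mul mulmx_ker row0.
pose u x := if x \in S then w 0 (enum_rank_in x0S x) else 0.
exists u; split.
- by move=> x; rewrite /u; case: ifP => // _; rewrite eqxx.
- have [k nz_k] : exists k, w 0 k != 0.
    apply/existsP; apply: contraNT nz_i; rewrite negb_exists => /forallP zero.
    by apply/eqP/rowP => k; rewrite [RHS]mxE; apply/eqP/negPn.
  by exists (enum_val k); rewrite /u enum_valP enum_valK_in.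
- move=> j jJ; rewrite (bigID (mem S)) /= [X in _ + X]big1 ?addr0; last first.
    by move=> x /negbTE xS; rewrite /u xS mul0r.
  rewrite big_enum_val /=.
  transitivity (\sum_k w 0 k * A k (enum_rank_in jJ j)).
    by apply: eq_bigr => k _; rewrite /u enum_valP enum_valK_in !mxE enum_rankK_in.
  by move/rowP/(_ (enum_rank_in jJ j)): wA0; rewrite [RHS]mxE [LHS]mxE.
Qed.

Lemma exists_annihilating_weights (X J : finType) (S : {set X}) (JJ : {set J})
    (M : X -> J -> rat) :
  (#|JJ| < #|S|)%N -> exists u : X -> rat,
    [/\ forall x, u x != 0 -> x \in S, exists x, u x != 0
      & forall g : J -> rat, {in ~: JJ, forall j, g j = 0} ->
          \sum_x u x * \sum_j g j * M x j = 0].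
Proof.
move=> JJ_lt_S; have [u [uS nz_u kernel]] := exists_kernel_weights M JJ_lt_S.
exists u; split=> // g g0.
under eq_bigr do rewrite mulr_sumr; rewrite exchange_big /=; apply: big1 => j _.
have [jJ|jNJ] := boolP (j \in JJ); last first.
  by apply: big1 => x _; rewrite g0 ?inE // mul0r mulr0.
under eq_bigr do rewrite mulrCA.
by rewrite -mulr_sumr kernel // mulr0.
Qed.

Lemma sub_as_delta_sum (T : finType) (f : T -> rat) (t0 a b : T) :
  f a - f b = \sum_t (f t - f t0) * ((a == t)%:R - (b == t)%:R).
Proof.
have delta c : \sum_t (f t - f t0) * (c == t)%:R = f c - f t0.
  rewrite (bigD1 c) //= eqxx mulr1 big1 ?addr0 // => t /negbTE.
  by rewrite eq_sym => ->; rewrite mulr0.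
by under eq_bigr do rewrite mulrBr; rewrite sumrB !delta opprB addrA subrK.
Qed.

End Annihilators.

Section UpperBounds.
Variables n m : nat.
Local Open Scope ring_scope.
Notation X := (outcome n m * outcome n m)%type.
Implicit Types (S : {set X}) (u : X -> rat) (N : cpnet n m).

Definition annihilates u (f : outcome n m -> rat) :=
  \sum_x u x * (f x.1 - f x.2) = 0.

Definition flip_sign u v : rat :=
  if [exists x, (0 < u x) && flips x v] then 1 else -1.

Definition sign_labels S u : {set X} :=
  [set x in S | [exists v, flips x v && (0 < flip_sign u v * u x)]].

Lemma sign_labels_sub S u : sign_labels S u \subset S.
Proof. by apply/subsetP => x; rewrite inE => /andP[]. Qed.

Lemma mem_sign_labels S u x v : x \in S -> flips x v ->
  (x \in sign_labels S u) = (0 < flip_sign u v * u x).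
Proof.
move=> xS flip_x; rewrite inE xS; apply/existsP/idP => [[w /andP[flip_w]]|pos].
  by rewrite (flips_inj flip_x flip_w).
by exists v; rewrite flip_x.
Qed.

Lemma flip_sign_witness u v x : u x != 0 -> flips x v ->
  exists x', flips x' v /\ 0 < flip_sign u v * u x'.
Proof.
move=> nz_x flip_x; rewrite /flip_sign.
case: existsP => [[x' /andP[pos flip']] | no_pos]; first by exists x'; rewrite mul1r.
exists x; split=> //; rewrite mulN1r oppr_gt0 lt_neqAle nz_x leNgt.
by apply/negP => pos; apply: no_pos; exists x; rewrite pos.
Qed.

Lemma sign_labels_not_realized S u N v x1 :
  {subset S <= is_swap (m:=m)} -> wf_cpnet N -> acyclic N ->
  (forall x, u x != 0 -> x \in S) ->
  {in S, forall x, concept N x = (x \in sign_labels S u)} ->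
  u x1 != 0 -> flips x1 v ->
  (forall x, u x != 0 -> flips x v -> cpt N v x.2 = cpt N v x1.2) ->
  ~ (forall rho : 'I_m -> rat, annihilates u (fun o => rho (o v))).
Proof.
move=> S_swap N_wf N_acyclic uS N_S nz_x1 flip_x1 same_cpt annihil.
have concept_v x : u x != 0 -> flips x v ->
    concept N x = (if cpt N v x1.2 is Some R then R (x.1 v, x.2 v) else false).
  by move=> nz_x flip_x; rewrite (concept_swap N_wf N_acyclic flip_x) same_cpt.
have [x2 [flip_x2 pos_x2]] := flip_sign_witness nz_x1 flip_x1.
have nz_x2 : u x2 != 0 by apply: contraTneq pos_x2 => ->; rewrite mulr0 ltxx.
have [R cpt_R] : exists R, cpt N v x1.2 = Some R.
  move: (N_S x2 (uS x2 nz_x2)).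
  rewrite concept_v // (mem_sign_labels _ (uS _ nz_x2) flip_x2) pos_x2.
  by case: (cpt N v x1.2) => // R _; exists R.
have R_st : strict_total R by case: N_wf => _ _ /(_ _ _ _ cpt_R).
pose gap x := flip_sign u v * u x *
  ((st_rank R (x.1 v))%:R - (st_rank R (x.2 v))%:R).
have gap_gt0 x : u x != 0 -> flips x v -> 0 < gap x.
  move=> nz_x flip_x; apply: st_rank_gap_gt0 => //.
  - by rewrite mulf_neq0 // /flip_sign; case: ifP; rewrite ?oppr_eq0 oner_eq0.
  - by case/flipsP: flip_x.
  - by rewrite -(mem_sign_labels _ (uS _ nz_x) flip_x) -N_S ?uS // concept_v // cpt_R.
have gap_ge0 x : 0 <= gap x.
  have [ux0|nz_x] := eqVneq (u x) 0; first by rewrite /gap ux0 mulr0 mul0r.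
  have [w flip_w] := swapP _ (S_swap _ (uS _ nz_x)).
  have [eq_wv|neq_wv] := eqVneq w v; first by rewrite ltW // gap_gt0 -?eq_wv.
  by case/flipsP: flip_w => agree _; rewrite /gap agree 1?eq_sym // subrr mulr0.
have sum_gap : \sum_x gap x = 0.
  have := annihil (fun a => (st_rank R a)%:R); rewrite /annihilates => ann.
  by rewrite /gap; under eq_bigr do rewrite -mulrA; rewrite -mulr_sumr ann mulr0.
move: (gap_gt0 x2 nz_x2 flip_x2).
by rewrite (psumr_eq0P (fun x _ => gap_ge0 x) sum_gap) ?ltxx.
Qed.

Lemma annihilates_restrict u (P : pred (outcome n m)) :
  (forall x, u x != 0 -> P x.1 = P x.2) -> (forall f, annihilates u f) ->
  forall f, annihilates (fun x => if P x.2 then u x else 0) f.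
Proof.
move=> P_same annihil f.
rewrite /annihilates -[RHS](annihil (fun o => if P o then f o else 0)).
apply: eq_bigr => x _; have [->|nz_x] := eqVneq (u x) 0.
  by rewrite if_same !mul0r.
by rewrite P_same //; case: (P x.2); rewrite ?subrr ?mul0r ?mulr0.
Qed.

Lemma shattered_annihilator_eq0 (C : cpnet n m -> Prop) S u :
  (forall N, C N -> wf_cpnet N /\ acyclic N) -> shattered C S ->
  (forall x, u x != 0 -> x \in S) -> (forall f, annihilates u f) ->
  forall x, u x = 0.
Proof.
move=> C_acyclic [S_swap S_shat]; have [d] := ubnP #|[set x | u x != 0]|.
elim: d u => // d IH u supp_lt uS annihil x0; apply/eqP/negPn/negP => nz_x0.
have [N [CN N_S]] := S_shat _ (sign_labels_sub S u).
have [N_wf N_acyclic] := C_acyclic N CN.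
pose flipped w := [exists x, (u x != 0) && flips x w].
have [v0 flip_x0] := swapP _ (S_swap _ (uS _ nz_x0)).
have flipped_v0 : flipped v0 by apply/existsP; exists x0; rewrite nz_x0.
have [v [/existsP[x1 /andP[nz_x1 flip_x1]] _ min_v]] :=
  minimal_ancestor N_acyclic flipped_v0.
have parents_fixed x : u x != 0 -> {in Pa N v, forall p, x.1 p = x.2 p}.
  move=> nz_x p pv; have [w flip_w] := swapP _ (S_swap _ (uS _ nz_x)).
  case/flipsP: (flip_w) => agree _; apply: agree.
  apply: contraNneq (min_v p pv) => ->.
  by apply/existsP; exists x; rewrite nz_x.
(* Support pairs never change the parents of v, so restricting u to one
   parent context of v keeps it an annihilator. *)
pose P := parents_agree N v x1.2.
have P_x1 : P x1.2 by apply/forall_inP => p _.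
case: (boolP [exists x, (u x != 0) && ~~ P x.2]).
  case/existsP=> x /andP[nz_x notP].
  pose u' x := if P x.2 then u x else 0.
  have supp_u' : [set x | u' x != 0] \proper [set x | u x != 0].
    apply/properP; split; last by exists x; rewrite !inE /u' ?(negbTE notP) ?eqxx.
    by apply/subsetP => y; rewrite !inE /u'; case: ifP; rewrite ?eqxx.
  have u'_x1 : u' x1 = 0.
    apply: (IH u' (leq_trans (proper_card supp_u') supp_lt) _ _ x1).
      by move=> y; rewrite /u'; case: ifP => _; [apply: uS | rewrite eqxx].
    apply: annihilates_restrict annihil => y nz_y.
    by apply: eq_forallb_in => p pv; rewrite parents_fixed.
  by move: u'_x1; rewrite /u' P_x1 => /eqP; apply/negP.
move=> all_P; have same_cpt x : u x != 0 -> flips x v -> cpt N v x.2 = cpt N v x1.2.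
  move=> nz_x _; case: N_wf => _ cpt_local _ _; apply: cpt_local => p pv.
  move/existsPn: all_P => /(_ x); rewrite nz_x negbK => /forall_inP/(_ p pv).
  by move/eqP.
apply: (sign_labels_not_realized S_swap N_wf N_acyclic uS N_S nz_x1 flip_x1).
  exact: same_cpt.
by move=> rho; apply: annihil.
Qed.

Lemma shattered_card_le_acyclic (C : cpnet n m -> Prop) S :
  (forall N, C N -> wf_cpnet N /\ acyclic N) -> shattered C S ->
  (#|S| <= m ^ n - 1)%N.
Proof.
move=> C_acyclic S_shat; rewrite leqNgt; apply/negP => S_large.
have [[o0 o0'] _] := exists_mem_of_card_gt S_large.
have JJ_lt_S : (#|[set~ o0]| < #|S|)%N.
  by rewrite cardsC1 card_ffun !card_ord -subn1.
pose M (x : X) o : rat := (x.1 == o)%:R - (x.2 == o)%:R.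
have [u [uS [x nz_x] annihil]] := exists_annihilating_weights M JJ_lt_S.
have annihil_all f : annihilates u f.
  rewrite /annihilates -[RHS](annihil (fun o => f o - f o0)); last first.
    by move=> o; rewrite !inE negbK => /eqP ->; rewrite subrr.
  by apply: eq_bigr => y _; rewrite (sub_as_delta_sum f o0).
by rewrite (shattered_annihilator_eq0 C_acyclic S_shat uS annihil_all) eqxx in nz_x.
Qed.

Lemma shattered_card_le_parentless (C : cpnet n m -> Prop) S :
  (forall N, C N -> wf_cpnet N /\ forall i, Pa N i = set0) -> shattered C S ->
  (#|S| <= (m - 1) * n)%N.
Proof.
move=> C_parentless [S_swap S_shat]; rewrite leqNgt; apply/negP => S_large.
have [x0 x0S] := exists_mem_of_card_gt S_large.
have [v0 _] := swapP _ (S_swap _ x0S); pose z := x0.1 v0.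
pose JJ := [set p : 'I_n * 'I_m | p.2 != z].
have JJ_lt_S : (#|JJ| < #|S|)%N.
  have -> : JJ = setX [set: 'I_n] [set~ z] by apply/setP => p; rewrite !inE.
  by rewrite cardsX cardsT cardsC1 !card_ord mulnC -subn1.
pose M (x : X) (p : 'I_n * 'I_m) : rat :=
  (x.1 p.1 == p.2)%:R - (x.2 p.1 == p.2)%:R.
have [u [uS [x1 nz_x1] annihil]] := exists_annihilating_weights M JJ_lt_S.
have [N [CN N_S]] := S_shat _ (sign_labels_sub S u).
have [N_wf no_parents] := C_parentless N CN.
have N_acyclic : acyclic N by move=> i j; rewrite /pa_edge no_parents inE.
have [v flip_x1] := swapP _ (S_swap _ (uS _ nz_x1)).
apply: (sign_labels_not_realized S_swap N_wf N_acyclic uS N_S nz_x1 flip_x1).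
  move=> x _ _; case: N_wf => _ cpt_local _ _.
  by apply: cpt_local => p; rewrite no_parents inE.
move=> rho; pose g (p : 'I_n * 'I_m) := (p.1 == v)%:R * (rho p.2 - rho z).
rewrite /annihilates -[RHS](annihil g); last first.
  by move=> p; rewrite !inE negbK => /eqP eq_p; rewrite /g eq_p subrr mulr0.
apply: eq_bigr => x _; congr (_ * _).
rewrite -(pair_bigA _ (fun w a => g (w, a) * M x (w, a))).
rewrite (bigD1 v) //= [X in _ = _ + X]big1 ?addr0; last first.
  by move=> w /negbTE neq_wv; apply: big1 => a _; rewrite /g /= neq_wv !mul0r.
by rewrite (sub_as_delta_sum rho z); apply: eq_bigr => a _; rewrite /g /= eqxx mul1r.
Qed.

End UpperBounds.

Section EssentialVariables.
Variables (n m : nat) (Y : eqType).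
Implicit Types (f : outcome n m -> Y) (o : outcome n m).

Definition essential f : {set 'I_n} :=
  [set l | [exists o : outcome n m, exists o' : outcome n m,
     [forall l', (l' != l) ==> (o l' == o' l')] && (f o != f o')]].

Lemma essential_eq f (o o' : outcome n m) :
  {in essential f, forall l, o l = o' l} -> f o = f o'.
Proof.
move=> eq_ess; pose mix i := [ffun l : 'I_n => if (l < i)%N then o' l else o l].
have step i : f (mix i) = f (mix i.+1).
  apply/eqP; apply: contraT => neq.
  have [l] : exists l, mix i l != mix i.+1 l.
    apply/existsP; apply: contraNT neq; rewrite negb_exists => /forallP same.
    by apply/eqP; congr f; apply/ffunP => l; apply/eqP/negPn.
  rewrite !ffunE ltnS; case: ltngtP; rewrite ?eqxx // => eq_li diff_l.
  suff /eq_ess eq_l : l \in essential f by rewrite eq_l eqxx in diff_l.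
  rewrite inE; apply/existsP; exists (mix i); apply/existsP; exists (mix i.+1).
  rewrite neq andbT; apply/forallP => l'; apply/implyP => neq_l'.
  have neq_l'i : (l' : nat) != i by rewrite -eq_li (inj_eq val_inj).
  by rewrite !ffunE ltnS (leq_eqVlt l') (negbTE neq_l'i).
have mix_eq i : f (mix 0) = f (mix i) by elim: i => // i ->.
have -> : o = mix 0 by apply/ffunP => l; rewrite ffunE.
have -> : o' = mix n by apply/ffunP => l; rewrite ffunE ltn_ord.
exact: mix_eq.
Qed.

End EssentialVariables.

Lemma connect_homo_leq (T : finType) (e : rel T) (f : T -> nat) a b :
  (forall x y, e x y -> f x < f y) -> connect e a b -> f a <= f b.
Proof.
move=> f_e /connectP[p p_path ->]; elim: p a p_path => //= c p IH a /andP[e_ac p_path].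
exact: leq_trans (ltnW (f_e _ _ e_ac)) (IH _ p_path).
Qed.

Lemma card_ord_lt n c : c <= n -> #|[set l : 'I_n | l < c]| = c.
Proof.
move=> le_cn; have widen_inj : injective (widen_ord le_cn).
  by move=> i j /(congr1 val) /= /val_inj.
rewrite -[RHS](card_ord c) -[RHS](card_imset _ widen_inj).
apply: eq_card => l; rewrite inE; apply/idP/imsetP => [lt_lc|[i _ ->]].
  by exists (Ordinal lt_lc) => //; apply: val_inj.
exact: (ltn_ord i).
Qed.

Section LowerBound.
Variables (n m k : nat) (z : 'I_m).
Notation X := (outcome n m * outcome n m)%type.
Implicit Types (j : 'I_n) (o : outcome n m) (T : {set X}) (A : {set 'I_m}).

Definition upd o j (a : 'I_m) : outcome n m := [ffun l => if l == j then a else o l].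

Definition lb_domain j (l : 'I_n) : {pred 'I_m} :=
  if l == j then predC1 z else if l < minn j k then predT else pred1 z.

Definition lb_base j : {set outcome n m} := [set o in family (lb_domain j)].

Definition lb_pairs j : {set X} := [set (o, upd o j z) | o in lb_base j].

Definition lb_set : {set X} := \bigcup_j lb_pairs j.

Definition context j o : outcome n m :=
  [ffun l : 'I_n => if l < minn j k then o l else z].

(* The values of A rank above z, which ranks above all other values. *)
Definition rank_key A (a : 'I_m) : nat :=
  (if a == z then 1 else if a \in A then 2 else 0) * m + a.

Definition order_above A : domrel m := [ffun p => rank_key A p.2 < rank_key A p.1].

Definition labels_at T j o : {set 'I_m} :=
  [set a | (upd (context j o) j a, context j o) \in T].

Definition lb_cpt T j o : option (domrel m) := Some (order_above (labels_at T j o)).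

(* Taking the essential variables as parents makes every parent non-dummy. *)
Definition lb_net T : cpnet n m := CPNet (fun j => essential (lb_cpt T j)) (lb_cpt T).

Lemma minn_leq_n j : minn j k <= n.
Proof. exact: leq_trans (geq_minl _ _) (ltnW (ltn_ord j)). Qed.

Lemma rank_key_inj A : injective (rank_key A).
Proof.
move=> a b /(congr1 (modn^~ m)); rewrite /rank_key !modnMDl !modn_small //.
exact: val_inj.
Qed.

Lemma order_above_strict_total A : strict_total (order_above A).
Proof.
split=> [a|a b c|a b neq_ab]; rewrite !ffunE ?ltnn //=.
  by move=> lt_ba lt_cb; apply: ltn_trans lt_cb lt_ba.
by rewrite -neq_ltn (inj_eq (@rank_key_inj A)) eq_sym.
Qed.

Lemma order_above_z A a : a != z -> order_above A (a, z) = (a \in A).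
Proof.
move=> neq_az; rewrite ffunE /rank_key /= eqxx (negbTE neq_az).
by have := ltn_ord a; have := ltn_ord z; case: (a \in A) => /=; lia.
Qed.

Lemma essential_lb_cpt T j l : l \in essential (lb_cpt T j) -> l < minn j k.
Proof.
rewrite inE => /existsP[o /existsP[o' /andP[/forallP same]]]; apply: contraNT.
rewrite -leqNgt => le_l; rewrite /lb_cpt /labels_at.
suff -> : context j o = context j o' by [].
apply/ffunP => l'; rewrite !ffunE; case: ifP => // lt_l'.
have neq_l'l : l' != l by apply: contraTneq lt_l' => ->; rewrite ltnNge le_l.
by apply/eqP; apply: (implyP (same l')).
Qed.

Lemma lb_net_wf T : wf_cpnet (lb_net T).
Proof.
split=> /=.
- by move=> j; apply: contraTN isT => /essential_lb_cpt; rewrite ltnNge geq_minl.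
- by move=> j o o' same; apply: essential_eq.
- by move=> j o r [<-]; apply: order_above_strict_total.
- move=> j l; rewrite inE => /existsP[o /existsP[o' /andP[/forallP same neq]]].
  exists o, o'; split; last exact/eqP.
  by move=> l' /(implyP (same l')) /eqP.
Qed.

Lemma lb_net_acyclic T : acyclic (lb_net T).
Proof.
have up l j : pa_edge (lb_net T) l j -> l < j.
  by move/essential_lb_cpt/leq_trans; apply; apply: geq_minl.
move=> j l /up lt_lj; apply/negP => /(connect_homo_leq (f := val) up).
by rewrite leqNgt lt_lj.
Qed.

Lemma lb_net_kbounded T : kbounded k (lb_net T).
Proof.
move=> j; apply: leq_trans (geq_minr j k).
rewrite -(card_ord_lt (minn_leq_n j)); apply: subset_leq_card; apply/subsetP => l.
by move/essential_lb_cpt; rewrite inE.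
Qed.

Lemma lb_pairs_flips j x : x \in lb_pairs j -> flips x j.
Proof.
case/imsetP=> o; rewrite inE => /familyP/(_ j); rewrite /lb_domain eqxx /= => neq_oz ->.
by apply/flipsP; split=> [l /negbTE neq_lj|]; rewrite /= ffunE ?neq_lj ?eqxx.
Qed.

Lemma lb_set_swap : {subset lb_set <= is_swap (m:=m)}.
Proof. by move=> x /bigcupP[j _ /lb_pairs_flips flip_x]; apply/swapP; exists j. Qed.

Lemma context_lb_base j o : o \in lb_base j -> context j (upd o j z) = upd o j z.
Proof.
rewrite inE => /familyP o_dom; apply/ffunP => l; rewrite !ffunE.
case: ifP => // not_lt; case: eqP => // /eqP neq_lj.
by move: (o_dom l); rewrite /lb_domain (negbTE neq_lj) not_lt => /eqP.
Qed.

Lemma concept_lb_net T x : x \in lb_set -> concept (lb_net T) x = (x \in T).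
Proof.
case/bigcupP=> j _ x_j; have flip_x := lb_pairs_flips x_j.
rewrite (concept_swap (lb_net_wf T) (@lb_net_acyclic T) flip_x).
case/imsetP: x_j => o o_base -> /=.
have neq_oz : o j != z.
  by move: o_base; rewrite inE => /familyP/(_ j); rewrite /lb_domain eqxx.
rewrite [upd o j z j]ffunE eqxx order_above_z // inE context_lb_base //.
suff -> : upd (upd o j z) j (o j) = o by [].
by apply/ffunP => l; rewrite !ffunE; case: eqP => // ->.
Qed.

Lemma lb_set_shattered : shattered (@acyclic_kbounded n m k) lb_set.
Proof.
split=> [x /lb_set_swap //|T _]; exists (lb_net T); split.
  by split; [apply: lb_net_wf | apply: lb_net_acyclic | apply: lb_net_kbounded].
by move=> x; apply: concept_lb_net.
Qed.

Lemma card_lb_base j : #|lb_base j| = (m - 1) * m ^ minn j k.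
Proof.
rewrite cardsE card_family foldrE big_map big_enum /= (bigD1 j) //=.
rewrite {1}/lb_domain eqxx cardC1 card_ord subn1; congr (_ * _).
rewrite (eq_bigr (fun l : 'I_n => if l < minn j k then m else 1)); last first.
  move=> l /negbTE neq_lj; rewrite /lb_domain neq_lj.
  by case: ifP => _; rewrite ?card1 // cardT size_enum_ord.
rewrite -big_mkcondr (eq_bigl (mem [set l : 'I_n | l < minn j k])); last first.
  move=> l; rewrite !inE andb_idl // => lt_l; apply: contraTneq lt_l => ->.
  by rewrite -leqNgt geq_minl.
by rewrite prod_nat_const card_ord_lt // minn_leq_n.
Qed.

Lemma card_lb_set : #|lb_set| = \sum_(j < n) (m - 1) * m ^ minn j k.
Proof.
rewrite -sum1_card partition_disjoint_bigcup /=.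
  apply: eq_bigr => j _; rewrite sum1_card card_imset ?card_lb_base //.
  by move=> o o' [].
move=> i j neq_ij; rewrite -setI_eq0; apply/set0Pn => -[x /setIP[x_i x_j]].
by rewrite (flips_inj (lb_pairs_flips x_i) (lb_pairs_flips x_j)) eqxx in neq_ij.
Qed.

End LowerBound.

Lemma mul_Mk n m k : 1 < m ->
  (m - 1) * Mk n m k = (m - 1) * (n - k) * m ^ k + (m ^ k - 1).
Proof.
move=> lt_1m; have geom : m ^ k - 1 = (m - 1) * \sum_(i < k) m ^ i.
  by rewrite !subn1 predn_exp.
by rewrite /Mk mulnDr mulnA geom mulKn // subn_gt0.
Qed.

Lemma sum_expn_minn n m k : k <= n -> 1 < m ->
  \sum_(j < n) (m - 1) * m ^ minn j k = (m - 1) * Mk n m k.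
Proof.
move=> le_kn lt_1m; rewrite mul_Mk // -big_distrr /=.
rewrite -(big_mkord xpredT (fun j => m ^ minn j k)).
rewrite (big_cat_nat (leq0n k) le_kn) /= mulnDr addnC -mulnA; congr (_ + _).
  rewrite (eq_big_nat _ _ (F2 := fun=> m ^ k)) ?sum_nat_const_nat //.
  by move=> j /andP[le_kj _]; rewrite (minn_idPr le_kj).
rewrite (eq_big_nat _ _ (F2 := fun j => m ^ j)); last first.
  by move=> j /andP[_ lt_jk]; rewrite (minn_idPl (ltnW lt_jk)).
by rewrite big_mkord !subn1 predn_exp.
Qed.

Theorem corollary1 (n m k : nat) :
  1 <= n -> 2 <= m -> k <= n - 1 ->
  [/\ VCD_is (@acyclic_kbounded n m (n - 1)) (m ^ n - 1),
      VCD_is (@acyclic_kbounded n m 0) ((m - 1) * n)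
    & VCD_ge (@acyclic_kbounded n m k) ((m - 1) * Mk n m k)].
Proof.
move=> n_gt0 lt_1m le_k; have m_gt0 : 0 < m by apply: ltnW.
pose z : 'I_m := Ordinal m_gt0.
have card_lb j : j <= n -> #|@lb_set n m j z| = (m - 1) * Mk n m j.
  by move=> le_jn; rewrite card_lb_set sum_expn_minn.
have Mk_full : (m - 1) * Mk n m (n - 1) = m ^ n - 1.
  rewrite mul_Mk // subKn // muln1 -[in RHS](subnK n_gt0) addn1 expnS.
  have : 0 < m ^ (n - 1) by rewrite expn_gt0 m_gt0.
  nia.
have Mk0 : (m - 1) * Mk n m 0 = (m - 1) * n.
  by rewrite mul_Mk // subn0 expn0 muln1 subnn addn0.
split; [split|split|].
- exists (@lb_set n m (n - 1) z); split; first exact: lb_set_shattered.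
  by rewrite card_lb ?leq_subr // Mk_full.
- by move=> S; apply: shattered_card_le_acyclic => N [].
- exists (@lb_set n m 0 z); split; first exact: lb_set_shattered.
  by rewrite card_lb // Mk0.
- move=> S; apply: shattered_card_le_parentless => N [N_wf _ N_kb]; split=> // i.
  by apply/eqP; rewrite -cards_eq0 -leqn0; apply: N_kb.
- exists (@lb_set n m k z); split; first exact: lb_set_shattered.
  by rewrite card_lb // (leq_trans le_k (leq_subr 1 n)).
Qed.
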